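(* Let $\mathcal H_1=\mathcal H_2=\mathbb C^2$ and let $P_1,P_2$ be orthogonal projectors of rank two on $\mathcal H_2\otimes\mathcal H_1$ with $P_1+P_2=I_2\otimes I_1$. The two-outcome qubit $1$-tester $\{T_1=\frac12P_1,\ T_2=\frac12P_2\}$ is not extremal if and only if at least one of the following holds: (a) $P_1=I_2\otimes|v\rangle\langle v|$ for some unit vector $|v\rangle\in\mathcal H_1$; (b) there are unit vectors $|f\rangle\in\mathcal H_2$, $|e\rangle\in\mathcal H_1$ such that $|f\rangle\otimes|e\rangle\in\operatorname{Supp}(P_1)$ and $|f^\perp\rangle\otimes|e\rangle\in\operatorname{Supp}(P_2)$, where $|f^\perp\rangle$ is a unit vector orthogonal to $|f\rangle$ (equivalently, $P_1=|f\rangle\langle f|\otimes|e\rangle\langle e|+|h\rangle\langle h|\otimes|e^\perp\rangle\langle e^\perp|$ for some unit vectors $|f\rangle,|h\rangle\in\mathcal H_2$, $|e\rangle\in\mathcal H_1$).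
   Context: A quantum $1$-tester with $M$ outcomes is a family of positive operators $\{T_i\}_{i=1}^M$ on $\mathcal H_2\otimes\mathcal H_1$ with $\sum_iT_i=I_2\otimes\rho$ for a density operator $\rho$ on $\mathcal H_1$; extremal means an extreme point of the convex set of all such testers with $M$ outcomes. $\operatorname{Supp}$ denotes the range of a projector. *)

(* Complex scalars: an arbitrary numClosedFieldType C
   (e.g. algC); qubits H = C^2 represented by column vectors 'cV[C]_2,
   H2 (x) H1 = C^4 represented by 'cV[C]_4, index of e_a (x) e_b is 2*a+b. *)
From HB Require Import structures.
From mathcomp Require Import all_boot all_order all_algebra.
Set Implicit Arguments. Unset Strict Implicit. Unset Printing Implicit Defensive.
Import Order.TTheory GRing.Theory Num.Theory.
Local Open Scope ring_scope.

Section QDefs.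
Variable C : numClosedFieldType.

Definition adjmx m n (A : 'M[C]_(m, n)) : 'M[C]_(n, m) := (map_mx Num.conj A)^T.

(* Kronecker (tensor) product of two qubit operators: A acts on H2, B on H1 *)
Definition kron2 (A B : 'M[C]_2) : 'M[C]_4 :=
  \matrix_(i, j) (A (inord (i %/ 2)) (inord (j %/ 2)) * B (inord (i %% 2)) (inord (j %% 2))).

Definition kronv (f e : 'cV[C]_2) : 'cV[C]_4 :=
  \col_i (f (inord (i %/ 2)) 0 * e (inord (i %% 2)) 0).

Definition psd n (A : 'M[C]_n) : Prop :=
  A = adjmx A /\ forall x : 'cV[C]_n, 0 <= (adjmx x *m A *m x) 0 0.

Definition density n (rho : 'M[C]_n) : Prop := psd rho /\ \tr rho = 1.

Definition tester M (T : 'I_M -> 'M[C]_4) : Prop :=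
  (forall i, psd (T i)) /\
  exists rho : 'M[C]_2, density rho /\ \sum_(i < M) T i = kron2 1%:M rho.

Definition extremal M (T : 'I_M -> 'M[C]_4) : Prop :=
  tester T /\
  forall (S U : 'I_M -> 'M[C]_4) (t : C),
    tester S -> tester U -> 0 < t < 1 ->
    (forall i, T i = t *: S i + (1 - t) *: U i) ->
    forall i, S i = T i /\ U i = T i.

Definition orthoproj n (P : 'M[C]_n) : Prop := P = adjmx P /\ P *m P = P.

Definition in_supp n (P : 'M[C]_n) (x : 'cV[C]_n) : Prop := exists y, P *m y = x.

Definition unitv n (v : 'cV[C]_n) : Prop := (adjmx v *m v) 0 0 = 1.
Definition orthv n (u v : 'cV[C]_n) : Prop := (adjmx u *m v) 0 0 = 0.

Definition ketbra n (v : 'cV[C]_n) : 'M[C]_n := v *m adjmx v.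

(* the two-outcome tester {P1/2, P2/2}: outcome 1 = ord0, outcome 2 = ord 1 *)
Definition halfTester (P1 P2 : 'M[C]_4) : 'I_2 -> 'M[C]_4 :=
  fun i => if val i == 0%N then 2^-1 *: P1 else 2^-1 *: P2.

End QDefs.

From HB Require Import structures.
From mathcomp Require Import all_boot all_order all_algebra ring.
From Stdlib Require Import Classical.

(* Both sides are equivalent to: P1 commutes with E = I (x) |e><e| for some
   unit vector e.
   If so, T_i = 1/2 P_i E + 1/2 P_i (I - E) splits T into two testers (with
   rho = |e><e| and rho = |e^perp><e^perp|) which differ from T, since
   P1 E = 1/2 P1 would force P1 = 0.
   Conversely, in a decomposition T = t S + (1 - t) U the psd summand S_i lives
   on Supp P_i, so D_i = S_i - T_i is block diagonal for P1 and
   D_1 + D_2 = I (x) sigma with sigma traceless Hermitian.  Hence P1 commutes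
   with I (x) sigma; either sigma = 0 and S = T, or |e><e| is an affine
   combination of sigma and I for an eigenvector e of sigma.
   Finally, if P1 commutes with E, the compression M = K^* P1 K along the
   isometry K : f |-> f (x) e is a qubit projector: M = 0 and M = I give (a)
   (with e^perp, resp. e), and M = |f><f| gives (b). *)

Set Implicit Arguments. Unset Strict Implicit. Unset Printing Implicit Defensive.
Import Order.TTheory GRing.Theory Num.Theory.
Local Open Scope ring_scope.

Local Notation "''[' u , v ]" := ((adjmx u *m v) 0 0) : ring_scope.
Local Notation "''u_' k" := (delta_mx k (0 : 'I_1))
  (at level 8, k at level 2, format "''u_' k") : ring_scope.

Section Adjoint.
Variable C : numClosedFieldType.

Lemma adjmxE m n (A : 'M[C]_(m, n)) i j : adjmx A i j = (A j i)^*.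
Proof. by rewrite !mxE. Qed.

Lemma adjmxK m n (A : 'M[C]_(m, n)) : adjmx (adjmx A) = A.
Proof. by apply/matrixP => i j; rewrite !adjmxE conjCK. Qed.

Lemma adjmxM m n p (A : 'M[C]_(m, n)) (B : 'M[C]_(n, p)) :
  adjmx (A *m B) = adjmx B *m adjmx A.
Proof. by rewrite /adjmx map_mxM trmx_mul. Qed.

Lemma adjmxD m n (A B : 'M[C]_(m, n)) : adjmx (A + B) = adjmx A + adjmx B.
Proof. by apply/matrixP => i j; rewrite !mxE rmorphD. Qed.

Lemma adjmxB m n (A B : 'M[C]_(m, n)) : adjmx (A - B) = adjmx A - adjmx B.
Proof. by apply/matrixP => i j; rewrite !mxE rmorphB. Qed.

Lemma adjmxZ m n (c : C) (A : 'M[C]_(m, n)) : adjmx (c *: A) = c^* *: adjmx A.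
Proof. by apply/matrixP => i j; rewrite !mxE rmorphM. Qed.

Lemma adjmx1 n : adjmx (1%:M : 'M[C]_n) = 1%:M.
Proof. by apply/matrixP => i j; rewrite !mxE eq_sym conjC_nat. Qed.

Lemma adjmx0 m n : adjmx (0 : 'M[C]_(m, n)) = 0.
Proof. by apply/matrixP => i j; rewrite !mxE rmorph0. Qed.

Lemma dotvv_ge0 n (v : 'cV[C]_n) : 0 <= '[v, v].
Proof.
by rewrite mxE; apply: sumr_ge0 => i _; rewrite adjmxE mulrC mul_conjC_ge0.
Qed.

Lemma dotvv_eq0 n (v : 'cV[C]_n) : '[v, v] = 0 -> v = 0.
Proof.
rewrite mxE => v0; apply/matrixP => i j; rewrite (ord1 j) mxE.
have ge0 k : xpredT k -> 0 <= adjmx v 0 k * v k 0.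
  by rewrite adjmxE mulrC mul_conjC_ge0.
have /eqP := psumr_eq0P ge0 v0 (i := i) isT.
by rewrite adjmxE mulrC mul_conjC_eq0 => /eqP.
Qed.

Lemma dotvZl n (c : C) (u v : 'cV[C]_n) : '[c *: u, v] = c^* * '[u, v].
Proof. by rewrite adjmxZ -scalemxAl mxE. Qed.

Lemma dotvZr n (c : C) (u v : 'cV[C]_n) : '[u, c *: v] = c * '[u, v].
Proof. by rewrite -scalemxAr mxE. Qed.

Lemma unitv_normalize n (v : 'cV[C]_n) : v != 0 -> unitv ((sqrtC '[v, v])^-1 *: v).
Proof.
move=> v_neq0; have vv_gt0 : 0 < '[v, v].
  by rewrite lt_def dotvv_ge0 andbT; apply: contra v_neq0 => /eqP/dotvv_eq0->.
have s_real : ((sqrtC '[v, v])^-1)^* = (sqrtC '[v, v])^-1.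
  by apply/conj_Creal; rewrite rpredV sqrtC_real ?ltW.
rewrite /unitv dotvZl dotvZr s_real mulrA -invfM -expr2 sqrtCK.
by rewrite mulVf ?gt_eqF.
Qed.

Definition mxform n (x : 'cV[C]_n) (A : 'M[C]_n) (y : 'cV[C]_n) :=
  (adjmx x *m A *m y) 0 0.

Lemma mxform_conj n (x y : 'cV[C]_n) A : (mxform x A y)^* = mxform y (adjmx A) x.
Proof. by rewrite /mxform -adjmxE !adjmxM adjmxK mulmxA. Qed.

Lemma mxformDl n (x1 x2 y : 'cV[C]_n) A :
  mxform (x1 + x2) A y = mxform x1 A y + mxform x2 A y.
Proof. by rewrite /mxform adjmxD !mulmxDl mxE. Qed.

Lemma mxformDr n (x y1 y2 : 'cV[C]_n) A :
  mxform x A (y1 + y2) = mxform x A y1 + mxform x A y2.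
Proof. by rewrite /mxform !mulmxDr mxE. Qed.

Lemma mxformZl n (c : C) (x y : 'cV[C]_n) A : mxform (c *: x) A y = c^* * mxform x A y.
Proof. by rewrite /mxform adjmxZ -!scalemxAl mxE. Qed.

Lemma mxformZr n (c : C) (x y : 'cV[C]_n) A : mxform x A (c *: y) = c * mxform x A y.
Proof. by rewrite /mxform -scalemxAr mxE. Qed.

Lemma mxformD n (x y : 'cV[C]_n) A B : mxform x (A + B) y = mxform x A y + mxform x B y.
Proof. by rewrite /mxform mulmxDr mulmxDl mxE. Qed.

Lemma mxformZ n (c : C) (x y : 'cV[C]_n) A : mxform x (c *: A) y = c * mxform x A y.
Proof. by rewrite /mxform -scalemxAr -scalemxAl mxE. Qed.

Lemma mxform_delta n (k : 'I_n) (A : 'M[C]_n) x :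
  mxform ('u_k) A x = (A *m x) k 0.
Proof.
rewrite /mxform -mulmxA mxE (bigD1 k) //= big1 ?addr0.
  by rewrite adjmxE mxE !eqxx conjC1 mul1r.
by move=> j /negPf jk; rewrite adjmxE mxE jk conjC0 mul0r.
Qed.

Lemma psd_mxform_eq0 n (A : 'M[C]_n) x : psd A -> mxform x A x = 0 -> A *m x = 0.
Proof.
move=> [A_herm A_ge0] Ax0; apply/matrixP => k l; rewrite (ord1 l) [RHS]mxE.
set y : 'cV[C]_n := 'u_k.
rewrite -mxform_delta -/y; set a := mxform y A x; set b := mxform y A y.
have b_ge0 : 0 <= b by exact: A_ge0.
have b1_real : (b + 1)^* = b + 1 by rewrite conj_Creal // rpredD ?rpred1 ?ger0_real.
have Axy : mxform x A y = a^* by rewrite mxform_conj -A_herm.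
(* the vector (b + 1) x - a y makes the form equal to -|a|^2 (b + 2) *)
have := A_ge0 ((b + 1) *: x + (- a) *: y).
rewrite -/(mxform _ A _) mxformDl !mxformDr !mxformZl !mxformZr Ax0 Axy -/a -/b.
rewrite b1_real rmorphN (_ : _ + _ = - (a * a^* * (b + 2))); last by ring.
rewrite oppr_ge0 => neg.
have b2_neq0 : b + 2 != 0 by rewrite gt_eqF // ltr_wpDl.
have : a * a^* * (b + 2) == 0.
  by rewrite eq_le neg mulr_ge0 ?mul_conjC_ge0 ?addr_ge0.
by rewrite mulf_eq0 (negPf b2_neq0) orbF mul_conjC_eq0 => /eqP.
Qed.

Lemma mx_col_delta m n (A : 'M[C]_(m, n)) i j : A i j = (A *m 'u_j) i 0.
Proof.
rewrite mxE (bigD1 j) //= big1 ?addr0; first by rewrite mxE !eqxx mulr1.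
by move=> k /negPf kj; rewrite mxE kj mulr0.
Qed.

Lemma mx_cols_eq0 m n (A : 'M[C]_(m, n)) :
  (forall j, A *m 'u_j = 0) -> A = 0.
Proof. by move=> A0; apply/matrixP => i j; rewrite mx_col_delta A0 !mxE. Qed.

End Adjoint.

Lemma mxtrace_idem (F : fieldType) n (P : 'M[F]_n) : P *m P = P -> \tr P = (\rank P)%:R.
Proof.
(* P = Cb Rb with Rb Cb = I_(rank P), hence tr P = tr (Rb Cb) *)
move=> PP; have P_base := mulmx_base P.
have [B B_inv] := row_fullP (col_base_full P).
move: P_base B_inv (row_base_free P).
move: (col_base P) (row_base P) => Cb Rb P_base B_inv Rb_free.
have CRCR : Cb *m Rb *m (Cb *m Rb) = Cb *m Rb by rewrite P_base PP.
have : Rb *m Cb *m Rb = 1%:M *m Rb.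
  have -> : Rb *m Cb *m Rb = B *m (Cb *m Rb *m (Cb *m Rb)) by rewrite !mulmxA B_inv mul1mx.
  by rewrite CRCR mulmxA B_inv.
move/(row_free_inj Rb_free) => RbCb.
by rewrite -{1}P_base mxtrace_mulC RbCb mxtrace1.
Qed.

Section Projectors.
Variable C : numClosedFieldType.

Lemma idem_mxtrace_eq0 n (P : 'M[C]_n) : P *m P = P -> \tr P = 0 -> P = 0.
Proof. by move=> PP; rewrite mxtrace_idem // => /eqP; rewrite pnatr_eq0 mxrank_eq0 => /eqP. Qed.

Lemma orthoproj_psd n (P : 'M[C]_n) : orthoproj P -> psd P.
Proof.
move=> [P_herm PP]; split => // x.
rewrite (_ : adjmx x *m P *m x = adjmx (P *m x) *m (P *m x)) ?dotvv_ge0 //.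
by rewrite adjmxM -P_herm -!mulmxA [P *m (P *m x)]mulmxA PP.
Qed.

Lemma psdZ n (c : C) (A : 'M[C]_n) : 0 <= c -> psd A -> psd (c *: A).
Proof.
move=> c_ge0 [A_herm A_ge0]; split; first by rewrite adjmxZ -A_herm conj_Creal ?ger0_real.
by move=> x; rewrite -/(mxform x _ x) mxformZ mulr_ge0 //; apply: A_ge0.
Qed.

Lemma orthoproj1 n : orthoproj (1%:M : 'M[C]_n).
Proof. by split; rewrite ?adjmx1 ?mulmx1. Qed.

Lemma orthoprojM n (P Q : 'M[C]_n) :
  orthoproj P -> orthoproj Q -> comm_mx P Q -> orthoproj (P *m Q).
Proof.
move=> [P_herm PP] [Q_herm QQ] PQ; split; first by rewrite adjmxM -P_herm -Q_herm PQ.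
by rewrite mulmxA -[P *m Q *m P]mulmxA -PQ mulmxA PP -mulmxA QQ.
Qed.

Lemma orthoproj_mulC n (P Q : 'M[C]_n) :
  orthoproj P -> orthoproj Q -> P *m Q = Q -> Q *m P = Q.
Proof. by move=> [P_herm _] [Q_herm _] PQ; rewrite Q_herm P_herm -adjmxM PQ -Q_herm. Qed.

Lemma orthoproj_sub_eq n (P Q : 'M[C]_n) :
  orthoproj P -> orthoproj Q -> P *m Q = Q -> \tr P = \tr Q -> P = Q.
Proof.
move=> oP oQ PQ trPQ; have QP := orthoproj_mulC oP oQ PQ.
case: oP oQ => [_ PP] [_ QQ].
apply/eqP; rewrite -subr_eq0; apply/eqP/idem_mxtrace_eq0; last by rewrite linearB /= trPQ subrr.
by rewrite mulmxBl !mulmxBr PP PQ QP QQ subrr subr0.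
Qed.

Lemma psd_convex_compress n (S U P : 'M[C]_n) (t c : C) :
  psd S -> psd U -> 0 < t < 1 -> orthoproj P ->
  c *: P = t *: S + (1 - t) *: U -> S = P *m S *m P.
Proof.
move=> S_psd [_ U_ge0] /andP[t_gt0 t_lt1] [P_herm PP] cP.
have S_kerP : S *m (1%:M - P) = 0.
  apply: mx_cols_eq0 => j; set x := (1%:M - P) *m 'u_j.
  rewrite -mulmxA; apply: psd_mxform_eq0 => //.
  have Px : P *m x = 0 by rewrite /x mulmxA mulmxBr PP mulmx1 subrr mul0mx.
  have : mxform x (c *: P) x = 0 by rewrite mxformZ /mxform -mulmxA Px mulmx0 mxE mulr0.
  have tS_ge0 : 0 <= t * mxform x S x by apply: mulr_ge0; [exact: ltW | exact: S_psd.2].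
  have tU_ge0 : 0 <= (1 - t) * mxform x U x.
    by apply: mulr_ge0; [rewrite subr_ge0 ltW | exact: U_ge0].
  rewrite cP mxformD !mxformZ => /eqP; rewrite paddr_eq0 // mulf_eq0 gt_eqF //=.
  by case/andP => /eqP.
have SP : S *m P = S by move/eqP: S_kerP; rewrite mulmxBr mulmx1 subr_eq0 => /eqP.
have PS : P *m S = S by rewrite [S]S_psd.1 P_herm -adjmxM SP -S_psd.1.
by rewrite PS SP.
Qed.

Lemma idem_fixed_unitv n (P : 'M[C]_n) :
  P *m P = P -> P != 0 -> exists2 f, unitv f & P *m f = f.
Proof.
move=> PP P_neq0; case: (pickP (fun j => P *m 'u_j != 0)) => [j Pj | P0].
  set v := P *m 'u_j; exists ((sqrtC '[v, v])^-1 *: v).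
    exact: unitv_normalize.
  by rewrite /v -scalemxAr (mulmxA P P) PP.
by case/eqP: P_neq0; apply: mx_cols_eq0 => j; apply/eqP; rewrite -[_ == _]negbK P0.
Qed.

Lemma ketbra_orthoproj n (e : 'cV[C]_n) : unitv e -> orthoproj (ketbra e).
Proof.
move=> e_unit; split; first by rewrite /ketbra adjmxM adjmxK.
by rewrite /ketbra mulmxA -[e *m _ *m e]mulmxA [adjmx e *m e]mx11_scalar e_unit mulmx1.
Qed.

Lemma mxtrace_ketbra n (e : 'cV[C]_n) : unitv e -> \tr (ketbra e) = 1.
Proof. by move=> e_unit; rewrite /ketbra mxtrace_mulC /mxtrace big_ord1. Qed.

Lemma ketbra_mul n (v w : 'cV[C]_n) : ketbra v *m w = '[v, w] *: v.
Proof. by rewrite /ketbra -mulmxA {1}[adjmx v *m w]mx11_scalar mul_mx_scalar. Qed.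

Lemma orthoproj_rank1 n (P : 'M[C]_n) :
  orthoproj P -> \rank P = 1%N -> exists2 f, unitv f & P = ketbra f.
Proof.
move=> oP rkP; have P_neq0 : P != 0 by rewrite -mxrank_eq0 rkP.
have [f f_unit Pf] := idem_fixed_unitv oP.2 P_neq0.
exists f => //; apply: orthoproj_sub_eq => //; first exact: ketbra_orthoproj.
  by rewrite /ketbra mulmxA Pf.
by rewrite mxtrace_idem ?oP.2 // rkP mxtrace_ketbra.
Qed.

Lemma isometry_compress m n (K : 'M[C]_(m, n)) (P : 'M[C]_m) :
  adjmx K *m K = 1%:M -> orthoproj P -> comm_mx P (K *m adjmx K) ->
  orthoproj (adjmx K *m P *m K) /\ P *m K = K *m (adjmx K *m P *m K).
Proof.
move=> KK [P_herm PP] PKK; set M := adjmx K *m P *m K.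
have PK : P *m K = K *m M by rewrite /M !mulmxA -PKK -!mulmxA KK mulmx1.
have KMM : K *m (M *m M) = K *m M by rewrite mulmxA -PK -mulmxA -PK mulmxA PP.
split=> //; split; first by rewrite /M !adjmxM adjmxK -P_herm mulmxA.
by rewrite -[M *m M]mul1mx -KK -mulmxA KMM mulmxA KK mul1mx.
Qed.

Lemma compress_blocks n (P D1 D2 : 'M[C]_n) : P *m P = P ->
  D1 = P *m D1 *m P -> D2 = (1%:M - P) *m D2 *m (1%:M - P) ->
  P *m (D1 + D2) = D1 /\ (D1 + D2) *m P = D1.
Proof.
move=> PP D1E D2E; have P_Pc : P *m (1%:M - P) = 0 by rewrite mulmxBr PP mulmx1 subrr.
have Pc_P : (1%:M - P) *m P = 0 by rewrite mulmxBl PP mul1mx subrr.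
have PD1 : P *m D1 = D1 by rewrite D1E !mulmxA PP.
have D1P : D1 *m P = D1 by rewrite D1E -mulmxA PP.
have PD2 : P *m D2 = 0 by rewrite D2E !mulmxA P_Pc !mul0mx.
have D2P : D2 *m P = 0 by rewrite D2E -mulmxA Pc_P mulmx0.
by rewrite mulmxDr mulmxDl PD1 PD2 D1P D2P !addr0.
Qed.

End Projectors.

Lemma ord2P (i : 'I_2) : i = ord0 \/ i = ord_max.
Proof. by case: i => [[|[|//]] i_lt]; [left | right]; apply: ord_inj. Qed.

Lemma big_ord2 (V : nmodType) (F : 'I_2 -> V) : \sum_(i < 2) F i = F ord0 + F ord_max.
Proof. by rewrite big_ord_recl big_ord1; congr (_ + F _); apply: ord_inj. Qed.

Lemma mxtrace0_sqr (R : comPzRingType) (s : 'M[R]_2) :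
  \tr s = 0 -> s *m s = ((s *m s) ord0 ord0)%:M.
Proof.
rewrite /mxtrace big_ord2 => /eqP; rewrite addr_eq0 => /eqP s11.
apply/matrixP => i j; rewrite !mxE !big_ord2.
by case: (ord2P i) => ->; case: (ord2P j) => -> /=; rewrite ?mulr1n ?mulr0n s11; ring.
Qed.

Section Qubit.
Variable C : numClosedFieldType.
Implicit Types (e f : 'cV[C]_2).

Definition perp e : 'cV[C]_2 :=
  \col_i (if val i == 0%N then - (e ord_max 0)^* else (e ord0 0)^*).

Lemma dotv2 (u v : 'cV[C]_2) :
  '[u, v] = (u ord0 0)^* * v ord0 0 + (u ord_max 0)^* * v ord_max 0.
Proof. by rewrite mxE big_ord2 !adjmxE. Qed.

Lemma perp_unitv e : unitv e -> unitv (perp e).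
Proof. by rewrite /unitv !dotv2 !mxE /= raddfN /= !conjCK => <-; ring. Qed.

Lemma perp_orthv e : orthv e (perp e).
Proof. by rewrite /orthv dotv2 !mxE /= mulrN mulrC addNr. Qed.

Lemma ketbraE n (v : 'cV[C]_n) i j : ketbra v i j = v i 0 * (v j 0)^*.
Proof. by rewrite /ketbra mxE big_ord1 adjmxE. Qed.

Lemma ketbra_perp e : unitv e -> ketbra e + ketbra (perp e) = 1%:M.
Proof.
rewrite /unitv dotv2 => e_unit; apply/matrixP => i j.
rewrite [LHS]mxE !ketbraE !mxE.
case: (ord2P i) => ->; case: (ord2P j) => -> /=; rewrite ?raddfN /= ?conjCK -?e_unit; ring.
Qed.

Lemma ketbra_orthonormal f g :
  unitv f -> unitv g -> orthv f g -> ketbra f + ketbra g = 1%:M.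
Proof.
move=> f_unit g_unit fg; rewrite -(ketbra_perp f_unit); congr (_ + _).
have f'_unit := perp_unitv f_unit; set f' := perp f in f'_unit *.
have g_f' : g = '[f', g] *: f'.
  rewrite -ketbra_mul -[LHS]mul1mx -(ketbra_perp f_unit) mulmxDl !ketbra_mul.
  by rewrite fg scale0r add0r.
move: g_unit; rewrite g_f'; move: ('[f', g]) => c.
rewrite /unitv dotvZl dotvZr f'_unit mulr1 => cc.
by rewrite /ketbra adjmxZ -scalemxAl -scalemxAr scalerA mulrC cc scale1r.
Qed.

Lemma qubit_orthoproj_cases (M : 'M[C]_2) : orthoproj M ->
  [\/ M = 0, M = 1%:M | exists2 f, unitv f & M = ketbra f].
Proof.
move=> oM; have := rank_leq_col M; case rkM: (\rank M) => [|[|[|//]]] _.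
- by apply: Or31; apply/eqP; rewrite -mxrank_eq0 rkM.
- exact/Or33/orthoproj_rank1.
- have M_unit : M \in unitmx by rewrite -row_full_unit /row_full rkM.
  by apply: Or32; have := mulmxK M_unit M; rewrite oM.2 mulmxV.
Qed.

(* a traceless Hermitian s squares to |s|^2 I, so (s + |s|) / (2|s|) is a
   rank-one projector *)
Lemma traceless_ketbra (s : 'M[C]_2) : s = adjmx s -> \tr s = 0 -> s != 0 ->
  exists e (c d : C), unitv e /\ ketbra e = c *: s + d *: 1%:M.
Proof.
move=> s_herm s_tr s_neq0.
set mu := (s *m s) ord0 ord0; have s2 : s *m s = mu%:M by apply: mxtrace0_sqr.
have s2_diag k : (s *m s) k k = '[s *m 'u_k, s *m 'u_k].
  by rewrite {1}s_herm mx_col_delta -mxform_delta /mxform adjmxM -!mulmxA.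
have mu_gt0 : 0 < mu.
  rewrite lt_def /mu s2_diag dotvv_ge0 andbT -s2_diag -/mu.
  apply: contra s_neq0 => /eqP mu0; apply/eqP/mx_cols_eq0 => k.
  by apply: dotvv_eq0; rewrite -s2_diag s2 mu0 !mxE eqxx.
set l := sqrtC mu.
have l_gt0 : 0 < l by rewrite sqrtC_gt0.
have l_real : l^* = l by rewrite conj_Creal // sqrtC_real ?ltW.
have ll : l * l = mu by rewrite -expr2 sqrtCK.
have l2_neq0 : l + l != 0 by rewrite gt_eqF // addr_gt0.
set Q := (l + l)^-1 *: (s + l *: 1%:M).
have QQ : Q *m Q = Q.
  rewrite /Q -scalemxAl -scalemxAr mulmxDl !mulmxDr s2 -!scalemxAl -!scalemxAr.
  rewrite !mulmx1 !mul1mx -ll; apply/matrixP => i j; rewrite !mxE.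
  by field; exact: l2_neq0.
have oQ : orthoproj Q.
  have c_real : ((l + l)^-1)^* = (l + l)^-1.
    by rewrite conj_Creal // ger0_real // invr_ge0 addr_ge0 ?ltW.
  by split => //; rewrite /Q adjmxZ adjmxD adjmxZ adjmx1 -s_herm c_real l_real.
have trQ : \tr Q = 1.
  rewrite /Q mxtraceZ mxtraceD mxtraceZ mxtrace1 s_tr add0r mulr_natr mulr2n.
  by rewrite mulVf.
have rkQ : \rank Q = 1%N.
  by apply/eqP; rewrite -(pnatr_eq1 C) -mxtrace_idem // trQ.
have [e e_unit eQ] := orthoproj_rank1 oQ rkQ.
by exists e, (l + l)^-1, ((l + l)^-1 * l); rewrite -eQ /Q scalerDr scalerA.
Qed.

End Qubit.

Lemma inord0E : (inord 0 : 'I_2) = ord0.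
Proof. by apply: ord_inj; rewrite inordK. Qed.

Lemma inord1E : (inord 1 : 'I_2) = ord_max.
Proof. by apply: ord_inj; rewrite inordK. Qed.

Ltac kron_entries :=
  rewrite /divn /modn /= ?inord0E ?inord1E /=;
  rewrite ?(mulr1n, mulr0n, mulr1, mulr0, mul1r, mul0r, conjC0, conjC1, addr0, add0r).

Section Tensor.
Variable C : numClosedFieldType.
Implicit Types (A B : 'M[C]_2) (e f : 'cV[C]_2).

Lemma kron2_id : kron2 1%:M 1%:M = 1%:M :> 'M[C]_4.
Proof.
apply/matrixP => i j; rewrite !mxE.
by case: i => [[|[|[|[|//]]]] ?]; case: j => [[|[|[|[|//]]]] ?]; kron_entries.
Qed.

Lemma kron2Dr A B B' : kron2 A (B + B') = kron2 A B + kron2 A B'.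
Proof. by apply/matrixP => i j; rewrite !mxE mulrDr. Qed.

Lemma kron2Zr A B c : kron2 A (c *: B) = c *: kron2 A B.
Proof. by apply/matrixP => i j; rewrite !mxE mulrCA. Qed.

Lemma kron2Br A B B' : kron2 A (B - B') = kron2 A B - kron2 A B'.
Proof. by apply/matrixP => i j; rewrite !mxE mulrBr. Qed.

Lemma kron2r0 A : kron2 A 0 = 0.
Proof. by apply/matrixP => i j; rewrite !mxE mulr0. Qed.

(* the matrix of the isometry f |-> f (x) e *)
Definition kronv_mx e : 'M[C]_(4, 2) :=
  \matrix_(i, j) ((inord (i %/ 2) == j)%:R * e (inord (i %% 2)) 0).

Lemma mul_kronv_mx e f : kronv_mx e *m f = kronv f e.
Proof.
apply/matrixP => i j; rewrite (ord1 j) !mxE big_ord2 !mxE.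
by case: i => [[|[|[|[|//]]]] ?]; kron_entries; rewrite mulrC.
Qed.

Lemma kronv_mx_isometry e : unitv e -> adjmx (kronv_mx e) *m kronv_mx e = 1%:M.
Proof.
rewrite /unitv dotv2 => e_unit; apply/matrixP => i j.
rewrite !mxE !big_ord_recr big_ord0 /= !adjmxE !mxE.
by case: (ord2P i) => ->; case: (ord2P j) => ->; kron_entries.
Qed.

Lemma kronv_mx_proj e : kronv_mx e *m adjmx (kronv_mx e) = kron2 1%:M (ketbra e).
Proof.
apply/matrixP => i j; rewrite [RHS]mxE ketbraE !mxE big_ord2 !adjmxE !mxE.
by case: i => [[|[|[|[|//]]]] ?]; case: j => [[|[|[|[|//]]]] ?]; kron_entries.
Qed.

Lemma kron2_ketbra_orthoproj e : unitv e -> orthoproj (kron2 1%:M (ketbra e)).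
Proof.
move=> e_unit; rewrite -kronv_mx_proj; split; first by rewrite adjmxM adjmxK.
by rewrite mulmxA -(mulmxA _ _ (kronv_mx e)) kronv_mx_isometry // mulmx1.
Qed.

Lemma mxtrace_kron2_ketbra e : unitv e -> \tr (kron2 1%:M (ketbra e)) = 2%:R.
Proof. by move=> e_unit; rewrite -kronv_mx_proj mxtrace_mulC kronv_mx_isometry // mxtrace1. Qed.

Lemma kron2_ketbra_perp e :
  unitv e -> kron2 1%:M (ketbra (perp e)) = 1%:M - kron2 1%:M (ketbra e).
Proof. by move=> e_unit; rewrite -kron2_id -kron2Br -(ketbra_perp e_unit) addrC addrK. Qed.

End Tensor.

Lemma half_itv (R : numFieldType) : 0 < (2^-1 : R) < 1.
Proof. by rewrite invr_gt0 ltr0n invf_lt1 ?ltr0n // ltr1n. Qed.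

Lemma subr_half (R : numFieldType) : 1 - 2^-1 = 2^-1 :> R.
Proof. by rewrite {1}(splitr 1) mul1r addrK. Qed.

Lemma convex_comb_eq (R : fieldType) (V : lmodType R) (t : R) (x y z : V) :
  t != 1 -> x = t *: y + (1 - t) *: z -> y = x -> z = x.
Proof.
move=> t_neq1 xE yx; apply: (scalerI (a := 1 - t)); first by rewrite subr_eq0 eq_sym.
have -> : (1 - t) *: z = x - t *: y by rewrite xE addrAC subrr add0r.
by rewrite yx scalerBl scale1r.
Qed.

Section Tester.
Variables (C : numClosedFieldType) (P1 P2 : 'M[C]_4).
Hypotheses (oP1 : orthoproj P1) (oP2 : orthoproj P2) (P1P2 : P1 + P2 = 1%:M).

Local Notation E e := (kron2 1%:M (ketbra e)).

Lemma P2_compl : P2 = 1%:M - P1.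
Proof. by rewrite -P1P2 addrAC subrr add0r. Qed.

Definition proj_pair (i : 'I_2) := if val i == 0%N then P1 else P2.

Lemma halfTesterE i : halfTester P1 P2 i = 2^-1 *: proj_pair i.
Proof. by rewrite /halfTester /proj_pair; case: ifP. Qed.

Lemma proj_pair_orthoproj i : orthoproj (proj_pair i).
Proof. by rewrite /proj_pair; case: ifP. Qed.

Lemma sum_proj_pair : \sum_(i < 2) proj_pair i = 1%:M.
Proof. by rewrite big_ord2. Qed.

Lemma comm_proj_pair e i : comm_mx P1 (E e) -> comm_mx (proj_pair i) (E e).
Proof.
move=> P1E; rewrite /proj_pair; case: ifP => // _; rewrite P2_compl.
by apply: comm_mx_sym; apply: comm_mxB; [exact: comm_mx1 | exact: comm_mx_sym].
Qed.

Lemma comm_kron2_ketbra_perp e :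
  unitv e -> comm_mx P1 (E e) -> comm_mx P1 (E (perp e)).
Proof.
by move=> e_unit P1E; rewrite kron2_ketbra_perp //; apply: comm_mxB; first exact: comm_mx1.
Qed.

Lemma proj_pair_kron2_tester e :
  unitv e -> comm_mx P1 (E e) -> tester (fun i => proj_pair i *m E e).
Proof.
move=> e_unit P1E; split.
  move=> i; apply/orthoproj_psd/orthoprojM.
  - exact: proj_pair_orthoproj.
  - exact: kron2_ketbra_orthoproj.
  - exact: comm_proj_pair.
exists (ketbra e); split.
  by split; [exact/orthoproj_psd/ketbra_orthoproj | exact: mxtrace_ketbra].
by rewrite -mulmx_suml sum_proj_pair mul1mx.
Qed.

Lemma halfTester_tester : tester (halfTester P1 P2).
Proof.
have half_ge0 : (0 : C) <= 2^-1 by rewrite invr_ge0 ler0n.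
split.
  by move=> i; rewrite halfTesterE; apply/psdZ/orthoproj_psd/proj_pair_orthoproj.
exists (2^-1 *: 1%:M); split.
  split; first exact/psdZ/orthoproj_psd/orthoproj1.
  by rewrite mxtraceZ mxtrace1 mulVf ?pnatr_eq0.
rewrite (eq_bigr _ (fun i _ => halfTesterE i)) -scaler_sumr sum_proj_pair.
by rewrite kron2Zr kron2_id.
Qed.

(* splitting T along I (x) |e><e| + I (x) |e^perp><e^perp| = I *)
Lemma commute_not_extremal e :
  unitv e -> P1 != 0 -> comm_mx P1 (E e) -> ~ extremal (halfTester P1 P2).
Proof.
move=> e_unit P1_neq0 P1E [_ T_ext].
have T_split i : halfTester P1 P2 i =
    2^-1 *: (proj_pair i *m E e) + (1 - 2^-1) *: (proj_pair i *m E (perp e)).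
  by rewrite subr_half -scalerDr -mulmxDr kron2_ketbra_perp // addrC subrK mulmx1 halfTesterE.
have [P1E_half _] := T_ext _ _ _ (proj_pair_kron2_tester e_unit P1E)
  (proj_pair_kron2_tester (perp_unitv e_unit) (comm_kron2_ketbra_perp e_unit P1E))
  (half_itv C) T_split ord0.
move: P1E_half; rewrite halfTesterE /= => P1E_half.
have P1E0 : P1 *m E e = 0.
  have EE := (kron2_ketbra_orthoproj e_unit).2.
  have : P1 *m E e = 2^-1 *: (P1 *m E e).
    by rewrite scalemxAl -P1E_half -mulmxA EE.
  move/eqP; rewrite -subr_eq0 -{1}[P1 *m E e]scale1r -scalerBl subr_half.
  by rewrite scaler_eq0 invr_eq0 pnatr_eq0 => /eqP.
move: P1E_half; rewrite P1E0 => /esym/eqP; rewrite scaler_eq0 invr_eq0 pnatr_eq0 /=.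
exact/negP.
Qed.

(* the traceless shift sigma = rho_S - I/2 of a convex decomposition of T *)
Lemma decomposition_shift S U t :
  tester S -> tester U -> 0 < t < 1 ->
  (forall i, halfTester P1 P2 i = t *: S i + (1 - t) *: U i) ->
  exists s : 'M[C]_2, [/\ s = adjmx s, \tr s = 0, comm_mx P1 (kron2 1%:M s)
                        & s = 0 -> forall i, S i = halfTester P1 P2 i].
Proof.
move=> [S_psd [rho [[[rho_herm _] rho_tr] S_sum]]] [U_psd _] t01 T_conv.
set D := fun i => S i - halfTester P1 P2 i.
have S_block i : S i = proj_pair i *m S i *m proj_pair i.
  apply: (psd_convex_compress (S_psd i) (U_psd i) t01 (proj_pair_orthoproj i) (c := 2^-1)).
  by rewrite -halfTesterE T_conv.
have D_block i : D i = proj_pair i *m D i *m proj_pair i.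
  rewrite /D halfTesterE mulmxBr mulmxBl -S_block -scalemxAr -scalemxAl.
  by rewrite !(proj_pair_orthoproj i).2.
have D2_block : D ord_max = (1%:M - P1) *m D ord_max *m (1%:M - P1).
  by rewrite -P2_compl; exact: D_block.
have [P1D DP1] := compress_blocks oP1.2 (D_block ord0) D2_block.
exists (rho - 2^-1 *: 1%:M); set s := rho - _.
have D_sum : D ord0 + D ord_max = kron2 1%:M s.
  rewrite /s kron2Br kron2Zr kron2_id -S_sum -(big_ord2 D) /D sumrB.
  by rewrite (eq_bigr _ (fun i _ => halfTesterE i)) -scaler_sumr sum_proj_pair big_ord2.
split.
- by rewrite /s adjmxB adjmxZ adjmx1 -rho_herm conj_Creal // ger0_real // invr_ge0 ler0n.
- by rewrite /s linearB /= mxtraceZ mxtrace1 rho_tr mulVf ?pnatr_eq0 ?subrr.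
- by rewrite /comm_mx -D_sum P1D DP1.
move=> s0; have D1_0 : D ord0 = 0 by rewrite -P1D D_sum s0 kron2r0 mulmx0.
have D2_0 : D ord_max = 0 by rewrite -[D _]add0r -D1_0 D_sum s0 kron2r0.
move=> i; apply/eqP; rewrite -subr_eq0 -/(D i).
by case: (ord2P i) => ->; rewrite ?D1_0 ?D2_0.
Qed.

Lemma commute_of_not_extremal :
  ~ extremal (halfTester P1 P2) -> exists2 e, unitv e & comm_mx P1 (E e).
Proof.
move=> T_not_ext; apply: NNPP => no_e; apply: T_not_ext; split.
  exact: halfTester_tester.
move=> S U t S_tester U_tester t01 T_conv.
have [s [s_herm s_tr P1s S_T]] := decomposition_shift S_tester U_tester t01 T_conv.
have [s0 | s_neq0] := eqVneq s 0.
  move=> i; split; first exact: S_T.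
  apply: (convex_comb_eq _ (T_conv i) (S_T s0 i)).
  by case/andP: t01 => _ /lt_eqF ->.
have [e [c [d [e_unit e_s]]]] := traceless_ketbra s_herm s_tr s_neq0.
case: no_e; exists e => //.
rewrite /comm_mx e_s kron2Dr !kron2Zr kron2_id mulmxDr mulmxDl -!scalemxAr -!scalemxAl P1s.
by rewrite mulmx1 mul1mx.
Qed.

Lemma cases_of_commute e : unitv e -> \tr P1 = 2%:R -> comm_mx P1 (E e) ->
  (exists v : 'cV[C]_2, unitv v /\ P1 = E v) \/
  (exists f e fp : 'cV[C]_2,
     unitv f /\ unitv e /\ unitv fp /\ orthv f fp /\
     in_supp P1 (kronv f e) /\ in_supp P2 (kronv fp e)).
Proof.
move=> e_unit trP1 P1E; have oE := kron2_ketbra_orthoproj e_unit.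
have KK := kronv_mx_isometry e_unit.
have P1KK : comm_mx P1 (kronv_mx e *m adjmx (kronv_mx e)) by rewrite kronv_mx_proj.
have [oM P1K] := isometry_compress KK oP1 P1KK.
move: oM P1K; set M := adjmx _ *m P1 *m _ => oM P1K.
have P1Ee : P1 *m E e = kronv_mx e *m M *m adjmx (kronv_mx e).
  by rewrite -kronv_mx_proj mulmxA P1K.
case: (qubit_orthoproj_cases oM) => [M0 | M1 | [f f_unit Mf]].
- left; exists (perp e); split; first exact: perp_unitv.
  have oE' := kron2_ketbra_orthoproj (perp_unitv e_unit).
  symmetry; apply: orthoproj_sub_eq => //.
    by rewrite kron2_ketbra_perp // mulmxBl mul1mx -P1E P1Ee M0 mulmx0 mul0mx subr0.
  by rewrite trP1 mxtrace_kron2_ketbra //; exact: perp_unitv.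
- left; exists e; split => //; apply: orthoproj_sub_eq => //.
    by rewrite P1Ee M1 mulmx1 kronv_mx_proj.
  by rewrite trP1 mxtrace_kron2_ketbra.
- right; exists f, e, (perp f).
  have Mf_f : M *m f = f by rewrite Mf ketbra_mul f_unit scale1r.
  have Mf'_0 : M *m perp f = 0 by rewrite Mf ketbra_mul perp_orthv scale0r.
  split=> //; split=> //; split; first exact: perp_unitv.
  split; first exact: perp_orthv.
  split.
    by exists (kronv f e); rewrite -mul_kronv_mx mulmxA P1K -mulmxA Mf_f.
  exists (kronv (perp f) e).
  by rewrite P2_compl mulmxBl mul1mx -mul_kronv_mx mulmxA P1K -mulmxA Mf'_0 mulmx0 subr0.
Qed.

Lemma commute_of_case_b f e fp :
  unitv f -> unitv e -> unitv fp -> orthv f fp ->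
  in_supp P1 (kronv f e) -> in_supp P2 (kronv fp e) -> comm_mx P1 (E e).
Proof.
move=> f_unit e_unit fp_unit ffp [y1 Py1] [y2 Py2].
rewrite /comm_mx -kronv_mx_proj; set K := kronv_mx e.
set u := K *m f; set w := K *m fp.
have P1u : P1 *m u = u by rewrite /u /K mul_kronv_mx -Py1 mulmxA oP1.2.
have P1w : P1 *m w = 0.
  by rewrite /w /K mul_kronv_mx -Py2 P2_compl mulmxA mulmxBr mulmx1 oP1.2 subrr mul0mx.
have KK : K *m adjmx K = u *m adjmx u + w *m adjmx w.
  rewrite -[X in X *m adjmx K]mulmx1 -(ketbra_orthonormal f_unit fp_unit ffp) /ketbra.
  by rewrite mulmxDr mulmxDl /u /w !adjmxM !mulmxA.
have uP1 : adjmx u *m P1 = adjmx u by rewrite {1}oP1.1 -adjmxM P1u.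
have wP1 : adjmx w *m P1 = 0 by rewrite {1}oP1.1 -adjmxM P1w adjmx0.
rewrite KK mulmxDr mulmxDl (mulmxA P1 u) (mulmxA P1 w) P1u P1w mul0mx.
by rewrite -(mulmxA u) -(mulmxA w) uP1 wP1 mulmx0.
Qed.

Lemma not_extremal_iff_commute : P1 != 0 ->
  ~ extremal (halfTester P1 P2) <-> exists2 e, unitv e & comm_mx P1 (E e).
Proof.
move=> P1_neq0; split; first exact: commute_of_not_extremal.
by case=> e e_unit; apply: commute_not_extremal.
Qed.

Lemma commute_iff_cases : \rank P1 = 2%N ->
  (exists2 e, unitv e & comm_mx P1 (E e)) <->
  ((exists v : 'cV[C]_2, unitv v /\ P1 = E v) \/
   (exists f e fp : 'cV[C]_2,
      unitv f /\ unitv e /\ unitv fp /\ orthv f fp /\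
      in_supp P1 (kronv f e) /\ in_supp P2 (kronv fp e))).
Proof.
move=> rkP1; have trP1 : \tr P1 = 2%:R by rewrite mxtrace_idem ?oP1.2 // rkP1.
split; first by case=> e e_unit; apply: cases_of_commute.
case=> [[v [v_unit P1v]] | [f [e [fp [f_unit [e_unit [fp_unit [ffp [P1fe P2fpe]]]]]]]]].
  by exists v => //; rewrite /comm_mx -P1v.
by exists e => //; apply: (commute_of_case_b f_unit _ fp_unit).
Qed.

End Tester.

Theorem mainTheorem12 (C : numClosedFieldType) (P1 P2 : 'M[C]_4) :
  orthoproj P1 -> orthoproj P2 -> \rank P1 = 2%N -> \rank P2 = 2%N ->
  P1 + P2 = kron2 1%:M 1%:M ->
  (~ extremal (halfTester P1 P2) <->
   ((exists v : 'cV[C]_2, unitv v /\ P1 = kron2 1%:M (ketbra v)) \/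
    (exists f e fp : 'cV[C]_2,
       unitv f /\ unitv e /\ unitv fp /\ orthv f fp /\
       in_supp P1 (kronv f e) /\ in_supp P2 (kronv fp e)))).
Proof.
move=> oP1 oP2 rkP1 _; rewrite kron2_id => P1P2.
have P1_neq0 : P1 != 0 by rewrite -mxrank_eq0 rkP1.
exact: iff_trans (not_extremal_iff_commute oP1 oP2 P1P2 P1_neq0)
                 (commute_iff_cases oP1 P1P2 rkP1).
Qed.
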